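(* Let $\mathbf{k}$ be a field and let $\mathfrak{B}=\mathbf{k}\langle g,x\rangle$ be the free algebra on $g,x$, made into a bialgebra by $\Delta(g)=g\otimes g$, $\Delta(x)=x\otimes 1+g\otimes x$, $\varepsilon(g)=1$, $\varepsilon(x)=0$. For integers $k,l\ge 0$ let $C_{k,l}$ be the sum of all monomials in $g,x$ containing exactly $k$ letters $g$ and $l$ letters $x$ (so $C_{0,0}=1$), and set $C_{k,l}=0$ if $k<0$ or $l<0$. Then for all integers $i,j\ge0$ and $n\ge1$, \[ (g^ix^j)^{[n+1]}=\sum_{\substack{k_1,\dots,k_n\ge 0\\ k_1+\cdots+k_n\le j}} g^iC_{k_1+\cdots+k_n,\,j-(k_1+\cdots+k_n)}\,g^iC_{k_1+\cdots+k_{n-1},\,k_n}\cdots g^iC_{k_1,k_2}\,g^iC_{0,k_1}. \]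
   Context: For an element $h$ of a bialgebra with multiplication $m$ and comultiplication $\Delta$, the $m$-th Sweedler power is $h^{[m]}=m^{(m)}\circ\Delta^{(m)}(h)$ for $m\ge1$, where $\Delta^{(1)}=\mathrm{id}$, $\Delta^{(m)}=(\Delta^{(m-1)}\otimes\mathrm{id})\circ\Delta$ for $m\ge2$, and $m^{(m)}(h_1\otimes\cdots\otimes h_m)=h_1\cdots h_m$. *)

From HB Require Import structures.
From mathcomp Require Import all_boot all_order all_algebra.
From mathcomp Require Import finmap.
From mathcomp Require Import monalg.

Set Implicit Arguments.
Unset Strict Implicit.
Unset Printing Implicit Defensive.

Import GRing.Theory.
Local Open Scope ring_scope.

(* Letters: [true] stands for g, [false] stands for x.
   Words (monomials) in g, x: the free monoid {fmonom bool}.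
   The free algebra k<g,x> is the monoid algebra {malg k[{fmonom bool}]}. *)
Definition word := {fmonom bool}.
Definition wg : word := fmu true.
Definition wx : word := fmu false.

Definition FA (K : fieldType) := {malg K[word]}.

(* n-tuples of words: the basis of the n-th tensor power of k<g,x>.
   They form a monoid under componentwise concatenation. *)
Record tmon (n : nat) : predArgType := TMon { tmval : {ffun 'I_n -> word} }.
HB.instance Definition _ n := [isNew for @tmval n].
HB.instance Definition _ n := [Choice of tmon n by <:].

Definition tone n : tmon n := TMon [ffun _ => mone].
Definition tmul n (s t : tmon n) : tmon n :=
  TMon [ffun i => mmul (tmval s i) (tmval t i)].

Lemma tmulA n : associative (@tmul n).
Proof. by move=> s t u; congr TMon; apply/ffunP=> i; rewrite !ffunE mulmA. Qed.
Lemma tmul1m n : left_id (@tone n) (@tmul n).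
Proof. by case=> f; congr TMon; apply/ffunP=> i; rewrite !ffunE mul1m. Qed.
Lemma tmulm1 n : right_id (@tone n) (@tmul n).
Proof. by case=> f; congr TMon; apply/ffunP=> i; rewrite !ffunE mulm1. Qed.
Lemma tmul_eq1 n (s t : tmon n) : tmul s t = tone n -> s = tone n /\ t = tone n.
Proof.
case: s t => [f] [h] [] /ffunP E; split; congr TMon; apply/ffunP=> i;
  have := E i; rewrite !ffunE => /unitm[A B]; by [rewrite A | rewrite B].
Qed.
HB.instance Definition _ n :=
  Choice_isMonomialDef.Build (tmon n) (@tmulA n) (@tmul1m n) (@tmulm1 n) (@tmul_eq1 n).

Definition TP (K : fieldType) n := {malg K[tmon n]}.

Definition single (w : word) : tmon 1 := TMon [ffun _ => w].
Definition tpair (u v : word) : tmon 2 :=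
  TMon [ffun i : 'I_2 => if i == ord0 then u else v].
Definition snoc n (s : tmon n) (v : word) : tmon n.+1 :=
  TMon [ffun i : 'I_n.+1 =>
          if unlift ord_max i is Some j then tmval s j else v].

Section Bialg.
Variable K : fieldType.

Definition Delta_letter (c : bool) : TP K 2 :=
  if c then << tpair wg wg >> else << tpair wx mone >> + << tpair wg wx >>.

Definition Delta_word (w : word) : TP K 2 :=
  \prod_(c <- fmonom_val w) Delta_letter c.

Definition Delta (a : FA K) : TP K 2 :=
  \sum_(w <- msupp a) a@_w *: Delta_word w.

Definition to_TP1 (a : FA K) : TP K 1 :=
  \sum_(w <- msupp a) a@_w *: << single w >>.

Definition tens_word n (X : TP K n) (v : word) : TP K n.+1 :=
  \sum_(t <- msupp X) X@_t *: << snoc t v >>.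

(* Deltan m = Delta^(m+1) : Delta^(1) = id,
   Delta^(m) = (Delta^(m-1) (x) id) o Delta. *)
Fixpoint Deltan (m : nat) (a : FA K) : TP K m.+1 :=
  if m is m'.+1 then
    \sum_(s <- msupp (Delta a))
       (Delta a)@_s *: tens_word (Deltan m' << tmval s ord0 >>) (tmval s ord_max)
  else to_TP1 a.

Definition multn n (X : TP K n) : FA K :=
  \sum_(t <- msupp X) X@_t *: << \big[mmul/mone]_(i < n) tmval t i >>.

Definition sweedler (h : FA K) (m : nat) : FA K := multn (Deltan m.-1 h).

Definition gA : FA K := << wg >>.
Definition xA : FA K := << wx >>.

Definition Ckl (k l : nat) : FA K :=
  \sum_(w : (k + l).-tuple bool | count id w == k) << FMonom (val w) >>.

(* right-hand side of the formula, with (k_1,...,k_n) = ks *)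
Definition rhs_term (i j n : nat) (ks : seq nat) : FA K :=
  \prod_(r < n.+1)
     (gA ^+ i * Ckl (sumn (take (n - r)%N ks)) (nth (j - sumn ks)%N ks (n - r)%N)).

End Bialg.

(* Write C_{a,b} for all integers a, b, with C_{a,b} = 0 as soon as a < 0 or b < 0.
   Splitting off the first letter of a monomial gives
     C_{a,b} = [a = b = 0] + g C_{a-1,b} + x C_{a,b-1},
   and since Delta is multiplicative with Delta g = g (x) g and
   Delta x = x (x) 1 + g (x) x, induction on a + b yields
     Delta C_{a,b} = sum_t C_{a+t,b-t} (x) C_{a,t},
   hence Delta (g^i C_{a,b}) = sum_t g^i C_{a+t,b-t} (x) g^i C_{a,t}.
   Sweedler powers satisfy h^[n+1] = sum h_(1)^[n] h_(2), so starting from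
   g^i x^j = g^i C_{0,j} and iterating n times gives a sum over (k_1, ..., k_n);
   the terms with k_1 + ... + k_n > j vanish because their first factor has a
   negative index. *)

From HB Require Import structures.
From mathcomp Require Import all_boot all_order all_algebra.
From mathcomp Require Import finmap monalg.
From mathcomp Require Import zify.
Import GRing.Theory.
Local Open Scope ring_scope.

Set Implicit Arguments.
Unset Strict Implicit.
Unset Printing Implicit Defensive.

Lemma big_ord_shift (V : nmodType) n (G H : nat -> V) :
  G 0%N = 0 -> H n = 0 -> (forall t, G t.+1 = H t) ->
  \sum_(t < n.+1) G t = \sum_(t < n.+1) H t.
Proof.
move=> G0 Hn GH; rewrite big_ord_recl big_ord_recr /= G0 Hn add0r addr0.
by apply: eq_bigr => t _; rewrite GH.
Qed.

Section LinearExtension.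
Variables (R : nzRingType) (M : choiceType) (V : lmodType R).
Implicit Types (F : M -> V) (a : {malg R[M]}).

Definition mlift F a : V := \sum_(m <- msupp a) a@_m *: F m.

Lemma mliftEw F a (d : {fset M}) : (msupp a `<=` d)%fset ->
  mlift F a = \sum_(m <- d) a@_m *: F m.
Proof.
move=> le_ad; rewrite /mlift (big_fset_incl _ le_ad) // => m _ /mcoeff_outdom->.
by rewrite scale0r.
Qed.

Lemma mlift_is_linear F : linear (mlift F).
Proof.
move=> c a b; set d := (msupp a `|` msupp b `|` msupp (c *: a + b))%fset.
have sub_a : (msupp a `<=` d)%fset.
  exact: fsubset_trans (fsubsetUl _ (msupp b)) (fsubsetUl _ _).
have sub_b : (msupp b `<=` d)%fset.
  exact: fsubset_trans (fsubsetUr (msupp a) _) (fsubsetUl _ _).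
rewrite (mliftEw _ (fsubsetUr (msupp a `|` msupp b)%fset _)).
rewrite (mliftEw _ sub_a) (mliftEw _ sub_b).
rewrite scaler_sumr -big_split; apply: eq_bigr => m _.
by rewrite mcoeffD mcoeffZ scalerDl scalerA.
Qed.

HB.instance Definition _ F :=
  GRing.isLinear.Build R {malg R[M]} V *:%R (mlift F) (mlift_is_linear F).

Lemma mliftU1 F m : mlift F << m >> = F m.
Proof. by rewrite (mliftEw _ msuppU_le) big_seq_fset1 mcoeffUU scale1r. Qed.

End LinearExtension.

Section LinearExtensionTheory.
Variables (R : nzRingType) (M : choiceType).

Lemma mlift_idU (a : {malg R[M]}) : mlift (fun m => << m >>) a = a.
Proof.
rewrite {2}[a]monalgE; apply: eq_bigr => m _.
by apply/malgP=> k; rewrite mcoeffZ !mcoeffU mulr_natr.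
Qed.

Lemma mlift_comp (V W : lmodType R) (f : V -> W) (F : M -> V) a :
  linear f -> f (mlift F a) = mlift (f \o F) a.
Proof.
move=> /GRing.semilinear_linear[fZ fD].
have f0 : f 0 = 0 by rewrite -(scale0r (0 : V)) fZ /= scale0r.
by rewrite /mlift (big_morph f fD f0); apply: eq_bigr => m _; rewrite fZ.
Qed.

Lemma malg_linear_ext (V : lmodType R) (f g : {malg R[M]} -> V) :
  linear f -> linear g -> (forall m, f << m >> = g << m >>) -> f =1 g.
Proof.
move=> lf lg fg a; rewrite -[a]mlift_idU !mlift_comp //.
by apply: eq_bigr => m _ /=; rewrite fg.
Qed.

End LinearExtensionTheory.

Lemma malg_bilinear_ext (R : nzRingType) (M N : choiceType) (V : lmodType R)
    (f g : {malg R[M]} -> {malg R[N]} -> V) :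
  bilinear_for *:%R *:%R f -> bilinear_for *:%R *:%R g ->
  (forall m n, f << m >> << n >> = g << m >> << n >>) -> forall A B, f A B = g A B.
Proof.
move=> [lf rf] [lg rg] fg A B; apply: (malg_linear_ext (lf B) (lg B)) => m.
exact: malg_linear_ext.
Qed.

Section MalgScalar.
Variables (R : comNzRingType) (M : monomType).
Implicit Types (x y : {malg R[M]}).

Lemma mul_malgCr c x : x * c%:MP = c *: x.
Proof.
rewrite malgM_def fgmulgU malgZ_def; apply: eq_bigr => k _.
by rewrite mulm1 mulrC.
Qed.

Lemma malg_scalerAr c x y : x * (c *: y) = c *: (x * y).
Proof. by rewrite -mul_malgCr mulrA mul_malgCr. Qed.

Lemma malg_mul_bilinear : bilinear_for *:%R *:%R ( *%R : {malg R[M]} -> _ -> _).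
Proof.
split=> [y|x] c u v /=; first by rewrite mulrDl scalerAl.
by rewrite mulrDr malg_scalerAr.
Qed.

End MalgScalar.

Lemma malgUM (R : nzRingType) (M : monomType) (u v : M) :
  << u >> * << v >> = << mmul u v >> :> {malg R[M]}.
Proof. by rewrite malgM_def fgmulUU mulr1. Qed.

Section TensorSquare.
Variable K : fieldType.
Local Notation FA := (FA K).

(* Locked: unfolded, [tens A B] is a big sum that unification would try to compute. *)
Fact tens_key : unit. Proof. by []. Qed.
Definition tens : FA -> FA -> TP K 2 :=
  locked_with tens_key (fun A B => mlift (fun u => mlift (fun v => << tpair u v >>) B) A).

Lemma tensE A B : tens A B = mlift (fun u => mlift (fun v => << tpair u v >>) B) A.
Proof. by rewrite [tens]unlock. Qed.

Lemma tensUU u v : tens << u >> << v >> = << tpair u v >>.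
Proof. by rewrite tensE !mliftU1. Qed.

Lemma tens_swap A B : tens A B = mlift (fun v => mlift (fun u => << tpair u v >>) A) B.
Proof.
rewrite tensE /mlift.
transitivity (\sum_(u <- msupp A) \sum_(v <- msupp B) A@_u *: (B@_v *: << tpair u v >>)).
  by apply: eq_bigr => u _; rewrite scaler_sumr.
rewrite exchange_big; apply: eq_bigr => v _; rewrite scaler_sumr.
by apply: eq_bigr => u _; rewrite !scalerA mulrC.
Qed.

Lemma tens_is_bilinear : bilinear_for *:%R *:%R tens.
Proof.
split=> [B|A] c x y; first by rewrite !tensE linearP.
by rewrite !tens_swap linearP.
Qed.

HB.instance Definition _ :=
  bilinear_isBilinear.Build K FA FA (TP K 2) *:%R *:%R tens tens_is_bilinear.

Lemma tens0l B : tens 0 B = 0. Proof. exact: linear0l. Qed.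
Lemma tens0r A : tens A 0 = 0. Proof. exact: linear0r. Qed.
Lemma tensDl A A' B : tens (A + A') B = tens A B + tens A' B.
Proof. exact: linearDl. Qed.
Lemma tensDr A B B' : tens A (B + B') = tens A B + tens A B'.
Proof. exact: linearDr. Qed.

Lemma tens_expand L R Y1 Y2 d P Q : L = Y1 + Y2 -> R = d + P + Q -> tens Y1 d = 0 ->
  tens L R = tens Y1 P + tens Y2 R + tens Y1 Q.
Proof. by move=> -> eR Y1d; rewrite tensDl {1}eR !tensDr Y1d add0r addrAC. Qed.

Lemma tpairM u v u' v' : mmul (tpair u v) (tpair u' v') = tpair (mmul u u') (mmul v v').
Proof. by congr TMon; apply/ffunP => i; rewrite !ffunE; case: ifP. Qed.

Lemma tpair1 : tpair mone mone = mone.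
Proof. by congr TMon; apply/ffunP => i; rewrite !ffunE; case: ifP. Qed.

Lemma tensM A B A' B' : tens A B * tens A' B' = tens (A * A') (B * B').
Proof.
move: A B; apply: malg_bilinear_ext => [||u v].
- by split=> [B|A] c x y /=; rewrite (linearPl, linearPr) mulrDl scalerAl.
- by split=> [B|A] c x y /=;
    rewrite ?mulrDl ?mulrDr -?scalerAl ?malg_scalerAr (linearPl, linearPr).
move: A' B'; apply: malg_bilinear_ext => [||u' v'].
- by split=> [B|A] c x y /=; rewrite (linearPl, linearPr) mulrDr malg_scalerAr.
- by split=> [B|A] c x y /=; rewrite mulrDr malg_scalerAr (linearPl, linearPr).
by rewrite !malgUM !tensUU malgUM tpairM.
Qed.

End TensorSquare.

Section Coproduct.
Variable K : fieldType.
Local Notation FA := (FA K).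
Local Notation gA := (gA K).
Local Notation xA := (xA K).
Local Notation Delta := (@Delta K).

HB.instance Definition _ :=
  GRing.isLinear.Build K FA (TP K 2) *:%R Delta (mlift_is_linear _).

Lemma DeltaU w : Delta << w >> = Delta_word K w.
Proof. exact: mliftU1. Qed.

Lemma Delta_wordM u v : Delta_word K (mmul u v) = Delta_word K u * Delta_word K v.
Proof. by rewrite /Delta_word fmM big_cat. Qed.

Lemma DeltaM A B : Delta (A * B) = Delta A * Delta B.
Proof.
move: A B; apply: malg_bilinear_ext => [||u v].
- split=> [B|A] c x y /=.
    by rewrite mulrDl -scalerAl linearP.
  by rewrite mulrDr malg_scalerAr linearP.
- split=> [B|A] c x y /=.
    by rewrite linearP mulrDl -scalerAl.
  by rewrite linearP mulrDr malg_scalerAr.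
by rewrite malgUM !DeltaU Delta_wordM.
Qed.

Lemma Delta_letterU (c : bool) : Delta << fmu c >> = Delta_letter K c.
Proof. by rewrite DeltaU /Delta_word fmU big_seq1. Qed.

Lemma Delta1 : Delta 1 = tens 1 1.
Proof. by rewrite -mpolyC1E DeltaU /Delta_word fm1 big_nil tensUU tpair1 mpolyC1E. Qed.

Lemma Delta_g : Delta gA = tens gA gA.
Proof. by rewrite Delta_letterU tensUU. Qed.

Lemma Delta_x : Delta xA = tens xA 1 + tens gA xA.
Proof. rewrite Delta_letterU -mpolyC1E !tensUU; reflexivity. Qed.

Lemma Delta_gX i : Delta (gA ^+ i) = tens (gA ^+ i) (gA ^+ i).
Proof.
elim: i => [|i IH]; first by rewrite !expr0 Delta1.
by rewrite !exprS DeltaM Delta_g {}IH tensM.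
Qed.

End Coproduct.

Section SweedlerPowers.
Variable K : fieldType.
Local Notation FA := (FA K).

HB.instance Definition _ n :=
  GRing.isLinear.Build K (TP K n) FA *:%R (@multn K n) (mlift_is_linear _).

Lemma multnU n (t : tmon n) :
  multn << t >> = << \big[mmul/mone]_(i < n) tmval t i >> :> FA.
Proof. exact: mliftU1. Qed.

Lemma snoc_prod n (t : tmon n) v :
  \big[mmul/mone]_(i < n.+1) tmval (snoc t v) i =
  mmul (\big[mmul/mone]_(i < n) tmval t i) v.
Proof.
rewrite big_ord_recr /= ffunE unlift_none; congr mmul; apply: eq_bigr => i _.
have -> : widen_ord (leqnSn n) i = lift ord_max i by apply: ord_inj; rewrite lift_max.
by rewrite ffunE liftK.
Qed.

Lemma multn_tens_word n (X : TP K n) v : multn (tens_word X v) = multn X * << v >>.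
Proof.
have -> : tens_word X v = mlift (fun t => << snoc t v >>) X by [].
have -> : multn X = mlift (fun t => << \big[mmul/mone]_(i < n) tmval t i >>) X by [].
rewrite mlift_comp; last exact: linearP.
rewrite -[RHS]/((fun x => x * << v >>) (mlift _ X)) mlift_comp; last first.
  exact: (malg_mul_bilinear _ _).1.
by apply: eq_bigr => t _ /=; rewrite multnU snoc_prod malgUM.
Qed.

Lemma sweedler1 (h : FA) : sweedler h 1 = h.
Proof.
have -> : sweedler h 1 = multn (mlift (fun w => << single w >>) h) by [].
rewrite mlift_comp; last exact: linearP.
rewrite -[RHS]mlift_idU; apply: eq_bigr => w _ /=.
by rewrite multnU big_ord1 ffunE.
Qed.

Lemma sweedlerSS (h : FA) n :
  sweedler h n.+2 =
  mlift (fun s : tmon 2 => sweedler << tmval s ord0 >> n.+1 * << tmval s ord_max >>)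
        (Delta h).
Proof.
rewrite /sweedler /=.
have -> F : \sum_(s <- msupp (Delta h)) (Delta h)@_s *: F s = mlift F (Delta h) by [].
rewrite mlift_comp; last exact: linearP.
by apply: eq_bigr => s _ /=; rewrite multn_tens_word.
Qed.

Lemma sweedler_linear n : linear (fun h : FA => sweedler h n.+1).
Proof.
case: n => [|n] c x y; first by rewrite !sweedler1.
by rewrite !sweedlerSS !linearP.
Qed.

Lemma mlift_tens (F : FA -> FA) A B : linear F ->
  mlift (fun s : tmon 2 => F << tmval s ord0 >> * << tmval s ord_max >>) (tens A B) =
  F A * B.
Proof.
move=> linF; move: A B; apply: malg_bilinear_ext => [||u v].
- split=> [B|A] c x y /=; first by rewrite linearPl linearP.
  by rewrite linearPr linearP.
- split=> [B|A] c x y /=; first by rewrite linF mulrDl -scalerAl.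
  by rewrite mulrDr malg_scalerAr.
by rewrite tensUU mliftU1 /= !ffunE.
Qed.

Lemma sweedler_coprod (h : FA) n (I : Type) (r : seq I) (A B : I -> FA) :
  Delta h = \sum_(t <- r) tens (A t) (B t) ->
  sweedler h n.+2 = \sum_(t <- r) sweedler (A t) n.+1 * B t.
Proof.
move=> Dh; rewrite sweedlerSS Dh linear_sum; apply: eq_bigr => t _.
exact: mlift_tens (sweedler_linear n).
Qed.

End SweedlerPowers.

Section IntegerIndexedC.
Variable K : fieldType.
Local Notation FA := (FA K).
Local Notation gA := (gA K).
Local Notation xA := (xA K).
Implicit Types (a b : int) (N : nat).

Lemma mcoeff_Ckl k l (w : word) :
  (Ckl K k l)@_w = ((size w == k + l) && (count id w == k))%:R.
Proof.
rewrite /Ckl raddf_sum /=; case: w => s /=.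
have [sz|sz] := eqVneq (size s) (k + l); last first.
  rewrite big1 // => t _; rewrite mcoeffU1; case: eqP => // -[st].
  by move: sz; rewrite -st size_tuple eqxx.
pose t0 : (k + l).-tuple bool := Tuple (introT eqP sz).
have mcoeff_t0 (t : (k + l).-tuple bool) :
    (<< FMonom t >> : FA)@_(FMonom s) = (t == t0)%:R.
  by rewrite mcoeffU1 fmP -[s]/(val t0) val_eqE.
have [cnt|cnt] := boolP (count id s == k).
  rewrite (bigD1 t0) // mcoeff_t0 eqxx big1 /= ?addr0 // => t /andP[_ /negbTE t_neq].
  by rewrite mcoeff_t0 t_neq.
rewrite big1 // => t cnt_t; rewrite mcoeff_t0; case: eqP => // t_eq.
by move: cnt_t; rewrite t_eq (negbTE cnt).
Qed.

Definition Cz (a b : int) : FA :=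
  match a, b with Posz k, Posz l => Ckl K k l | _, _ => 0 end.
#[global] Arguments Cz : simpl never.

Lemma mcoeff_Cz a b (w : word) :
  (Cz a b)@_w = [&& 0 <= a, 0 <= b, (size w)%:Z == a + b & (count id w)%:Z == a]%:R.
Proof.
by case: a b => [k|k] [l|l]; rewrite /= ?mcoeff0 // mcoeff_Ckl -PoszD !eqz_nat.
Qed.

Lemma Cz_eq0 a b : (a < 0) || (b < 0) -> Cz a b = 0.
Proof. by case: a b => [k|k] [l|l]. Qed.

Lemma mcoeff_fmuM (c : bool) (A : FA) (s : seq bool) :
  (<< fmu c >> * A)@_(FMonom s) =
  if s is c' :: s' then (c' == c)%:R * A@_(FMonom s') else 0.
Proof.
rewrite mcoeffMl msuppU1 big_seq_fset1 mcoeffUU.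
have fmuM m : (mmul (fmu c) m == FMonom s) = (c :: m == s) by rewrite fmP fmM fmU.
case: s fmuM => [|c' s] fmuM.
  by rewrite big1 // => m _; rewrite fmuM mulr0n.
rewrite {3}[A]monalgE raddf_sum mulr_sumr; apply: eq_bigr => m _.
rewrite /= fmuM eqseq_cons mcoeffU fmP mul1r eq_sym.
by case: (c' == c); rewrite ?mul1r ?mul0r ?mulr0n.
Qed.

Lemma Cz_rec a b :
  Cz a b = ((a == 0) && (b == 0))%:R + gA * Cz (a - 1) b + xA * Cz a (b - 1).
Proof.
(* Rewriting single occurrences keeps unification from comparing, hence
   computing, distinct products in the monoid algebra. *)
apply/malgP => -[s].
rewrite 2!mcoeffD !mcoeff_Cz {1}mcoeff_fmuM {1}mcoeff_fmuM mcoeffMn mcoeff1.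
case: s => [|c s] /=.
  rewrite fmP fm1 eqxx !addr0; congr (_ %:R); congr nat_of_bool; lia.
have count_le := count_size id s.
rewrite fmP fm1 /= mul0rn add0r !mcoeff_Cz.
case: c; rewrite /= ?mul1r ?mul0r ?addr0 ?add0r; congr (_ %:R); congr nat_of_bool; lia.
Qed.

Lemma Cz_rec_neq0 a b : (a != 0) || (b != 0) ->
  Cz a b = gA * Cz (a - 1) b + xA * Cz a (b - 1).
Proof.
move=> ab_neq0; rewrite {1}Cz_rec (_ : _ && _ = false); last by lia.
by rewrite -addrA add0r.
Qed.

Lemma Cz00 : Cz 0 0 = 1.
Proof. by rewrite Cz_rec !Cz_eq0 // !mulr0 !addr0. Qed.

Lemma xA_exp j : xA ^+ j = Cz 0 j.
Proof.
elim: j => [|j IH]; first by rewrite Cz00.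
rewrite Cz_rec (@Cz_eq0 (0 - 1)) // mulr0 addr0 add0r exprS IH.
by congr (_ * Cz _ _); lia.
Qed.

Definition Cz_coprod (N : nat) (a b : int) : TP K 2 :=
  \sum_(t < N) tens (Cz (a + t%:Z) (b - t%:Z)) (Cz a t%:Z).

Lemma Cz_coprod_eq0 N a b : (a < 0) || (b < 0) -> Cz_coprod N a b = 0.
Proof.
case/orP=> neg; apply: big1 => t _.
  by rewrite (@Cz_eq0 a) ?neg ?orbT // tens0r.
by rewrite Cz_eq0 ?tens0l //; lia.
Qed.

Lemma Cz_coprod00 N : (0 < N)%N -> Cz_coprod N 0 0 = tens 1 1.
Proof.
case: N => // N _; rewrite /Cz_coprod big_ord_recl /= -[0%:Z]/(0 : int) addr0 Cz00.
rewrite big1 ?addr0 // => t _.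
by rewrite Cz_eq0 ?tens0l //; lia.
Qed.

Lemma Cz_coprod_rec N a b : 0 <= a -> 0 <= b -> (a != 0) || (b != 0) -> b < N%:Z ->
  Cz_coprod N a b =
  tens gA gA * Cz_coprod N (a - 1) b + (tens xA 1 + tens gA xA) * Cz_coprod N a (b - 1).
Proof.
move=> a_ge0 b_ge0 ab_neq0; case: N => [|N] ltbN; first by lia.
have term (t : nat) : tens (Cz (a + t%:Z) (b - t%:Z)) (Cz a t%:Z) =
    tens (gA * Cz (a + t%:Z - 1) (b - t%:Z)) (gA * Cz (a - 1) t%:Z) +
    tens (xA * Cz (a + t%:Z) (b - 1 - t%:Z)) (Cz a t%:Z) +
    tens (gA * Cz (a + t%:Z - 1) (b - t%:Z)) (xA * Cz a (t%:Z - 1)).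
  apply: tens_expand.
  - rewrite Cz_rec (_ : (_ && _) = false) ?add0r; last by lia.
    by have -> : b - t%:Z - 1 = b - 1 - t%:Z by lia.
  - exact: Cz_rec.
  have [/andP[/eqP a0 /eqP t0]|_] := boolP (_ && _); last exact: tens0r.
  by rewrite (@Cz_eq0 (a + t%:Z - 1)) ?mulr0 ?tens0l //; lia.
have sum_gg :
    \sum_(t < N.+1) tens (gA * Cz (a + t%:Z - 1) (b - t%:Z)) (gA * Cz (a - 1) t%:Z) =
    \sum_(t < N.+1) tens gA gA * tens (Cz (a - 1 + t%:Z) (b - t%:Z)) (Cz (a - 1) t%:Z).
  apply: eq_bigr => t _; rewrite [RHS]tensM.
  by have -> : a - 1 + t%:Z = a + t%:Z - 1 by lia.
have sum_x1 :
    \sum_(t < N.+1) tens (xA * Cz (a + t%:Z) (b - 1 - t%:Z)) (Cz a t%:Z) =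
    \sum_(t < N.+1) tens xA 1 * tens (Cz (a + t%:Z) (b - 1 - t%:Z)) (Cz a t%:Z).
  by apply: eq_bigr => t _; rewrite [RHS]tensM mul1r.
have sum_gx :
    \sum_(t < N.+1) tens (gA * Cz (a + t%:Z - 1) (b - t%:Z)) (xA * Cz a (t%:Z - 1)) =
    \sum_(t < N.+1) tens gA xA * tens (Cz (a + t%:Z) (b - 1 - t%:Z)) (Cz a t%:Z).
  apply: (big_ord_shift
    (G := fun t : nat => tens (gA * Cz (a + t%:Z - 1) (b - t%:Z)) (xA * Cz a (t%:Z - 1)))
    (H := fun t : nat => tens gA xA * tens (Cz (a + t%:Z) (b - 1 - t%:Z)) (Cz a t%:Z))).
  - by rewrite /= (@Cz_eq0 a (0%:Z - 1)) ?mulr0 ?tens0r //; lia.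
  - by rewrite /= (@Cz_eq0 (a + N%:Z)) ?tens0l ?mulr0 //; lia.
  move=> t /=; rewrite [RHS]tensM.
  have -> : a + t.+1%:Z - 1 = a + t%:Z by lia.
  have -> : b - t.+1%:Z = b - 1 - t%:Z by lia.
  by have -> : t.+1%:Z - 1 = t%:Z by lia.
rewrite /Cz_coprod (eq_bigr _ (fun (t : 'I_N.+1) _ => term t)) !big_split /=.
rewrite mulrDl !mulr_sumr addrA.
exact: (congr2 +%R (congr2 +%R sum_gg sum_x1) sum_gx).
Qed.

Lemma Delta_Cz N a b : b < N%:Z -> Delta (Cz a b) = Cz_coprod N a b.
Proof.
have [m] : exists m : nat, a + b < m%:Z by exists `|a + b|.+1; lia.
elim: m a b => [|m IH] a b lt_ab_m ltbN.
  by rewrite !(Cz_eq0, Cz_coprod_eq0) ?linear0 //; lia.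
have [neg|] := boolP ((a < 0) || (b < 0)).
  by rewrite Cz_eq0 // Cz_coprod_eq0 // linear0.
move=> nonneg; have [a_ge0 b_ge0] : 0 <= a /\ 0 <= b by lia.
have [ab_neq0|] := boolP ((a != 0) || (b != 0)); last first.
  case/norP=> /negPn/eqP-> /negPn/eqP->.
  by rewrite Cz00 Delta1 Cz_coprod00 //; lia.
rewrite Cz_coprod_rec // Cz_rec_neq0 // linearD /= {1}DeltaM {1}DeltaM Delta_g Delta_x.
by rewrite !IH //; lia.
Qed.

End IntegerIndexedC.

Lemma sum_ffunS (V : nmodType) n N (F : seq nat -> V) :
  \sum_(kk : {ffun 'I_n.+1 -> 'I_N}) F [seq nat_of_ord (kk t) | t <- enum 'I_n.+1] =
  \sum_(k < N) \sum_(kk : {ffun 'I_n -> 'I_N})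
     F (nat_of_ord k :: [seq nat_of_ord (kk t) | t <- enum 'I_n]).
Proof.
rewrite pair_big /=.
pose cons_ffun (p : 'I_N * {ffun 'I_n -> 'I_N}) : {ffun 'I_n.+1 -> 'I_N} :=
  [ffun t => if unlift ord0 t is Some t' then p.2 t' else p.1].
rewrite (reindex cons_ffun); last first.
  exists (fun kk : {ffun 'I_n.+1 -> 'I_N} => (kk ord0, [ffun t => kk (lift ord0 t)])).
    move=> [k kk] _ /=.
    by rewrite ffunE unlift_none; congr pair; apply/ffunP => t; rewrite !ffunE liftK.
  move=> kk _; apply/ffunP => t; rewrite ffunE.
  by case: unliftP => [t' ->|->]; rewrite ?ffunE.
apply: eq_bigr => -[k kk] _; rewrite enum_ordSl /= ffunE unlift_none -map_comp.
by congr (F (_ :: _)); apply: eq_map => t /=; rewrite ffunE liftK.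
Qed.

Section SweedlerPowersOfgC.
Variable K : fieldType.
Local Notation FA := (FA K).
Local Notation gA := (gA K).
Local Notation Cz := (Cz K).
Implicit Types (a b : int) (N : nat).

(* [gCprod i n a b [:: k_1; ...; k_n]] is
   g^i C_{a+k_1+...+k_n, b-(k_1+...+k_n)} ... g^i C_{a+k_1,k_2} g^i C_{a,k_1};
   the second index of the first factor is the default value of [nth]. *)
Definition gCprod i n a b (ks : seq nat) : FA :=
  \prod_(r < n.+1) (gA ^+ i * Cz (a + (sumn (take (n - r) ks))%:Z)
                                (nth (b - (sumn ks)%:Z) [seq k%:Z | k <- ks] (n - r))).

Lemma gCprod0 i a b : gCprod i 0 a b [::] = gA ^+ i * Cz a b.
Proof. by rewrite /gCprod big_ord1 /= addr0 subr0. Qed.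

Lemma gCprodS i n a b k ks :
  gCprod i n.+1 a b (k :: ks) =
  gCprod i n (a + k%:Z) (b - k%:Z) ks * (gA ^+ i * Cz a k%:Z).
Proof.
rewrite /gCprod big_ord_recr /= subnn /= -[0%:Z]/(0 : int) addr0.
apply: (congr2 _ _ (erefl _)); apply: eq_bigr => r _.
rewrite subSn /=; last by rewrite -ltnS.
by rewrite !PoszD opprD !addrA.
Qed.

Lemma Delta_gXCz i N a b : b < N%:Z ->
  Delta (gA ^+ i * Cz a b) =
  \sum_(t < N) tens (gA ^+ i * Cz (a + t%:Z) (b - t%:Z)) (gA ^+ i * Cz a t%:Z).
Proof.
move=> ltbN; rewrite DeltaM Delta_gX (Delta_Cz _ _ ltbN) mulr_sumr.
by apply: eq_bigr => t _; rewrite tensM.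
Qed.

Lemma sweedler_gXCz i N n a b : b < N%:Z ->
  sweedler (gA ^+ i * Cz a b) n.+1 =
  \sum_(kk : {ffun 'I_n -> 'I_N}) gCprod i n a b [seq nat_of_ord (kk t) | t <- enum 'I_n].
Proof.
elim: n a b => [|n IH] a b ltbN.
  rewrite sweedler1 (eq_bigr (fun=> gA ^+ i * Cz a b)) => [|kk _]; last first.
    by rewrite enum_ord0 gCprod0.
  by rewrite sumr_const card_ffun !card_ord expn0 mulr1n.
rewrite (sweedler_coprod _ (Delta_gXCz i a ltbN)) sum_ffunS; apply: eq_bigr => k _.
rewrite IH; last by lia.
by rewrite mulr_suml; apply: eq_bigr => kk _; rewrite gCprodS.
Qed.

End SweedlerPowersOfgC.

Section ClosedForm.
Variable K : fieldType.
Local Notation gA := (gA K).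
Local Notation Cz := (Cz K).
Local Notation gCprod := (gCprod K).

Lemma gCprod_rhs i j n ks : size ks = n -> (sumn ks <= j)%N ->
  gCprod i n 0 j%:Z ks = rhs_term K i j n ks.
Proof.
move=> sz_ks le_ks_j; apply: eq_bigr => r _; rewrite add0r.
have -> : nth (j%:Z - (sumn ks)%:Z) [seq k%:Z | k <- ks] (n - r) =
          (nth (j - sumn ks)%N ks (n - r))%:Z.
  have [lt_r_sz|le_sz_r] := ltnP (n - r) (size ks); first exact: nth_map.
  by rewrite !nth_default ?size_map // subzn.
by [].
Qed.

Lemma gCprod_eq0 i j n ks : size ks = n -> (j < sumn ks)%N -> gCprod i n 0 j%:Z ks = 0.
Proof.
move=> sz_ks lt_j_ks; rewrite /gCprod big_ord_recl /= subn0.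
rewrite nth_default ?size_map ?sz_ks // Cz_eq0 ?mulr0 ?mul0r //; lia.
Qed.

End ClosedForm.

Lemma sumn_ffun n N (kk : {ffun 'I_n -> 'I_N}) :
  sumn [seq nat_of_ord (kk t) | t <- enum 'I_n] = (\sum_(t < n) kk t)%N.
Proof. by rewrite sumnE big_map big_enum. Qed.

Theorem lemma2p11 (K : fieldType) (i j n : nat) : (1 <= n)%N ->
  sweedler (gA K ^+ i * xA K ^+ j) n.+1 =
  \sum_(kk : {ffun 'I_n -> 'I_j.+1} | (\sum_(t < n) kk t <= j)%N)
     rhs_term K i j n [seq nat_of_ord (kk t) | t <- enum 'I_n].
Proof.
(* The formula also holds for n = 0. *)
move=> _; rewrite xA_exp (@sweedler_gXCz K i j.+1 n 0 j); last by lia.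
rewrite [LHS](bigID (fun kk : {ffun 'I_n -> 'I_j.+1} => (\sum_(t < n) kk t <= j)%N)) /=.
rewrite [X in _ + X]big1 ?addr0 => [|kk]; last first.
  rewrite -ltnNge -sumn_ffun => /(gCprod_eq0 K i); apply.
  by rewrite size_map size_enum_ord.
apply: eq_bigr => kk; rewrite -sumn_ffun => /(gCprod_rhs K i); apply.
by rewrite size_map size_enum_ord.
Qed.
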